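(* Let $\tilde\partial$ be a quasi-elementary $M_{A,B}$-differential with associated sets $P,Q,R\subset B$ and $X,Y,Z\subset A\setminus B$. (a) If $q\in Q$, $r\in R$, $y\in Y$, $z\in Z$ satisfy $\tilde\partial(q)=r$ and $\tilde\partial_{A\setminus B}(y)=z$, then $\langle\tilde\partial(y),q\rangle=-\langle\tilde\partial(z),r\rangle$. (b) If $y\in Y$, $z\in Z$ satisfy $\tilde\partial_{A\setminus B}(y)=z$ and $b\in B$ appears in $\tilde\partial(z)$, then $b\in R$ and there exists $q\in Q$ with $\tilde\partial(q)=b$ such that $q$ appears in $\tilde\partial(y)$.
   Context: $\mathbb E$ a field; $A=\{a_1\prec\dots\prec a_N\}$ a finite linearly ordered graded set; $\mathbb E(A)$ the graded vector space with basis $A$; $\langle\cdot,\cdot\rangle$ the scalar product with $\langle a_i,a_j\rangle=\delta_{ij}$. An $M$-differential is a degree $-1$ map $\partial$ with $\partial^2=0$, $\partial(a_i)\in\mathrm{span}\{a_1,\dots,a_{i-1}\}$. For $B\subset A$ with $\partial\mathbb E(B)\subset\mathbb E(B)$ it is an $M_{A,B}$-differential; $\partial_B$ denotes its restriction to $\mathbb E(B)$ and $\partial_{A\setminus B}$ the induced differential on $\mathbb E(A)/\mathbb E(B)$, identified with $\mathbb E(A\setminus B)$. An $M$-differential is elementary if every basis element maps to $0$ or to a single basis element and no two basis elements map to the same basis element. For $\partial$ with $\partial_B$, $\partial_{A\setminus B}$ elementary: $Q=\{b\in B:\partial_Bb\ne0\}$, $R=\partial_B(Q)$, $P=B\setminus(Q\cup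 R)$, $Y=\{a\in A\setminus B:\partial_{A\setminus B}a\ne0\}$, $Z=\partial_{A\setminus B}(Y)$, $X$ the rest of $A\setminus B$. A vector $v$ contains (or $a$ appears in $v$) $a\in A$ if $\langle v,a\rangle\ne0$. $\partial$ is quasi-elementary if $\partial_B,\partial_{A\setminus B}$ are elementary, each $\partial(x)$ for $x\in X$ contains at most one element of $P$, the corresponding coefficient is $1$, and each element of $P$ appears in at most one $\partial(x)$, $x\in X$. *)

From mathcomp Require Import all_boot all_order all_algebra.
Set Implicit Arguments. Unset Strict Implicit. Unset Printing Implicit Defensive.
Import GRing.Theory.
Local Open Scope ring_scope.

(* A = {a_1 < ... < a_N} is modelled by the ordinal type 'I_N with
   its natural order; the grading is deg : 'I_N -> int.  A linear map on E(A)
   is a matrix D : 'M[F]_N acting on row vectors, so that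
     D i j = < d(a_i), a_j >   (coefficient of a_j in d(a_i)). *)

Section Defs.
Variables (F : fieldType) (N : nat).
Implicit Types (D : 'M[F]_N) (S B : {set 'I_N}).

Definition Mdiff (deg : 'I_N -> int) D : Prop :=
  [/\ D *m D = 0,
      (forall i j, D i j != 0 -> deg j = deg i - 1) &
      (forall i j, D i j != 0 -> (j < i)%N)].

Definition MABdiff (deg : 'I_N -> int) B D : Prop :=
  Mdiff deg D /\ (forall i j, i \in B -> D i j != 0 -> j \in B).

(* For S = B (resp. S = A\B), the entries D i j with i, j in S are exactly the
   matrix of d_B (resp. of the induced differential d_{A\B} on
   E(A)/E(B) = E(A\B)). *)

Definition mapsto S D (i j : 'I_N) : bool :=
  [&& i \in S, j \in S, D i j == 1 & [forall k in S, (k != j) ==> (D i k == 0)]].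

Definition elementary S D : Prop :=
  (forall i, i \in S -> (forall j, j \in S -> D i j = 0) \/ exists j, mapsto S D i j)
  /\ (forall i i' j, mapsto S D i j -> mapsto S D i' j -> i = i').

(* Q = {b in S : d_S b <> 0},  R = d_S(Q),  P = S \ (Q u R)
   (applied to S = B this gives Q,R,P; to S = A\B it gives Y,Z,X) *)
Definition Qset S D : {set 'I_N} := [set i in S | [exists j in S, D i j != 0]].
Definition Rset S D : {set 'I_N} := [set j | [exists i in Qset S D, mapsto S D i j]].
Definition Pset S D : {set 'I_N} := S :\: (Qset S D :|: Rset S D).

Definition quasi_elementary (deg : 'I_N -> int) B D : Prop :=
  let P := Pset B D in let X := Pset (~: B) D in
  [/\ MABdiff deg B D,
      elementary B D /\ elementary (~: B) D,
      (forall x p p', x \in X -> p \in P -> p' \in P ->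
          D x p != 0 -> D x p' != 0 -> p = p'),
      (forall x p, x \in X -> p \in P -> D x p != 0 -> D x p = 1) &
      (forall p x x', p \in P -> x \in X -> x' \in X ->
          D x p != 0 -> D x' p != 0 -> x = x')].

End Defs.

From mathcomp Require Import all_boot all_order all_algebra.
Import GRing.Theory.
Local Open Scope ring_scope.

(* If d(y) = z modulo E(B), then d(y) = z + sum_(k in B) <d y, k> k, and reading
   off the coefficient of b in d(d y) = 0 gives
   <d z, b> = - sum_(k in B) <d y, k> <d k, b>.
   When d_B is elementary, every k in B with <d k, b> <> 0 is the unique
   d_B-preimage of b, so the sum collapses to the single term <d y, q>. *)

Section ElementaryDifferential.
Context {F : fieldType} {N : nat}.
Implicit Types (D : 'M[F]_N) (S B : {set 'I_N}).

Lemma mapsto_Qset {S D i j} : mapsto S D i j -> i \in Qset S D.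
Proof.
case/and4P=> iS jS /eqP Dij _.
by rewrite inE iS; apply/existsP; exists j; rewrite jS Dij oner_neq0.
Qed.

Lemma mapsto_Rset {S D i j} : mapsto S D i j -> j \in Rset S D.
Proof.
by move=> Mij; rewrite inE; apply/existsP; exists i; rewrite (mapsto_Qset Mij).
Qed.

Lemma elementary_mapsto {S D k b} :
  elementary S D -> k \in S -> b \in S -> D k b != 0 -> mapsto S D k b.
Proof.
case=> elemS _ kS bS Dkb_neq0.
case: (elemS k kS) => [Dk0 | [j Mkj]]; first by rewrite Dk0 ?eqxx in Dkb_neq0.
case/and4P: (Mkj) => _ _ _ /forallP Dk_single.
case: (eqVneq j b) => [<- // | jb].
by move: (Dk_single b); rewrite bS eq_sym jb (negbTE Dkb_neq0).
Qed.

Lemma mapsto_compl_coef {B D y z} b :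
  D *m D = 0 -> mapsto (~: B) D y z ->
  D z b = - \sum_(k in B) D y k * D k b.
Proof.
move=> DD /and4P[_ zB' /eqP Dyz /forallP Dy_single].
have := congr1 (fun M : 'M[F]_N => M y b) DD; rewrite !mxE.
rewrite (bigID (mem B)) /= addrC (bigD1 z) /=; last by rewrite -in_setC.
rewrite Dyz mul1r big1 ?addr0 => [/eqP|k /andP[kB kz]].
  by rewrite addr_eq0 => /eqP.
by move: (Dy_single k); rewrite in_setC kB kz => /eqP ->; rewrite mul0r.
Qed.

Lemma elementary_compl_coef {B D q r y z} :
  D *m D = 0 -> elementary B D ->
  mapsto B D q r -> mapsto (~: B) D y z -> D y q = - D z r.
Proof.
move=> DD elemB Mqr Myz; have /and4P[qB rB /eqP Dqr _] := Mqr.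
rewrite (mapsto_compl_coef r DD Myz) opprK (bigD1 q) //= Dqr mulr1.
rewrite big1 ?addr0 // => k /andP[kB kq].
have [-> | Dkr_neq0] := eqVneq (D k r) 0; first by rewrite mulr0.
by rewrite (elemB.2 k q r (elementary_mapsto elemB kB rB Dkr_neq0) Mqr) eqxx in kq.
Qed.

Lemma elementary_compl_preimage {B D y z b} :
  D *m D = 0 -> elementary B D -> mapsto (~: B) D y z ->
  b \in B -> D z b != 0 -> exists2 q, mapsto B D q b & D y q != 0.
Proof.
move=> DD elemB Myz bB; rewrite (mapsto_compl_coef b DD Myz) oppr_eq0 => sum_neq0.
have [k kB] : exists2 k, k \in B & D y k * D k b != 0.
  apply/exists_inP; apply: contraNT sum_neq0 => /exists_inPn Dyk_Dkb_eq0.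
  by apply/eqP/big1 => k kB; apply/eqP/negPn/Dyk_Dkb_eq0.
rewrite mulf_eq0 negb_or => /andP[Dyk_neq0 Dkb_neq0].
by exists k; first exact: elementary_mapsto.
Qed.

End ElementaryDifferential.

Theorem lemma4p1 (F : fieldType) (N : nat) (deg : 'I_N -> int)
    (B : {set 'I_N}) (D : 'M[F]_N) :
  quasi_elementary deg B D ->
  (* (a) *)
  (forall q r y z,
      q \in Qset B D -> r \in Rset B D -> y \in Qset (~: B) D -> z \in Rset (~: B) D ->
      mapsto B D q r -> mapsto (~: B) D y z ->
      D y q = - D z r) /\
  (* (b) *)
  (forall y z b,
      y \in Qset (~: B) D -> z \in Rset (~: B) D -> mapsto (~: B) D y z ->
      b \in B -> D z b != 0 ->
      b \in Rset B D /\
      exists2 q, q \in Qset B D & mapsto B D q b && (D y q != 0)).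
Proof.
move=> [[[DD _ _] _] [elemB _] _ _ _]; split=> [q r y z _ _ _ _ | y z b _ _ Myz bB Dzb].
  exact: elementary_compl_coef.
have [q Mqb Dyq] := elementary_compl_preimage DD elemB Myz bB Dzb.
split; first exact: mapsto_Rset Mqb.
by exists q; [exact: mapsto_Qset Mqb | rewrite Mqb].
Qed.
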